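(* Let $\mathcal C=\{\tau_k\mid k\in\mathcal K\}$ be a translation-based cipher on $V=(\mathbb F_2)^n=V_1\oplus\cdots\oplus V_b$, $V_j\cong(\mathbb F_2)^m$, with $\ell$ rounds, round maps $\gamma_h,\lambda_h$ ($1\le h\le \ell$) and key-schedule $\Phi:\mathcal K\to V^\ell$. Suppose $\Phi$ is 3-round independent at round $i$ for some $2\le i\le \ell-1$. Suppose that every S-box $f$ composing the parallel maps $\gamma_i$ and $\gamma_{i+1}$ is (1) differentially $2^r$-uniform, with $r<m$, and (2) strongly $(r-1)$-anti-invariant, and that $\lambda_i$ is strongly proper. Then there do not exist non-trivial partitions $\mathcal A,\mathcal B$ of $V$ such that for all $k\in\mathcal K$ the map $\tau_k$ maps $\mathcal A$ onto $\mathcal B$. In particular, $\Gamma(\mathcal C)=\langle\tau_k\mid k\in\mathcal K\rangle$ is primitive.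
   Context: Let $m,b>1$, $n=mb$, and $V=(\mathbb F_2)^n=V_1\oplus\cdots\oplus V_b$ with each $V_j\cong(\mathbb F_2)^m$. Permutations act on the right ($v\mapsto v\gamma$); $\sigma_v$ denotes the translation $x\mapsto x+v$. A parallel map is $\gamma\in\mathrm{Sym}(V)$ with $(v_1\oplus\cdots\oplus v_b)\gamma=v_1\gamma_1\oplus\cdots\oplus v_b\gamma_b$ for fixed permutations $\gamma_j$ of $V_j$ (the S-boxes). A wall is a subspace $\bigoplus_{j\in I}V_j$ with $\emptyset\ne I\subsetneq\{1,\dots,b\}$. A linear map $\lambda\in\mathrm{GL}(V)$ is strongly proper if no wall is mapped by $\lambda$ into a wall (including itself). A translation-based (tb) cipher with $\ell$ rounds: for each round $h$ there is a parallel map $\gamma_h$ with $0\gamma_h=0$ and $\lambda_h\in\mathrm{GL}(V)$, both independent of the key; a key-schedule $\Phi:\mathcal K\to V^\ell$, $k\mapsto(k_1,\dots,k_\ell)$; and the encryption function is $\tau_k=\gamma_1\lambda_1\sigma_{k_1}\gamma_2\lambda_2\sigma_{k_2}\cdots\gamma_\ell\lambda_\ell\sigma_{k_\ell}$. $\Phi$ is 3-round independent at round $i$ if there are fixed $\bar k_j\in V$ ($j\notin\{i-1,i,i+1\}$) such that for every $(k_{i-1},k_i,k_{i+1})\in V^3$ the tuple $(\bar k_1,\dots,\bar k_{i-2},k_{i-1},k_i,k_{i+1},\bar k_{i+2},\dots,\bar k_\ell)$ lies in $\mathrm{Im}(\Phi)$. For $f:(\mathbb F_2)^m\to(\mathbb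 F_2)^m$, $\delta_f(a,b)=|\{x: f(x+a)+f(x)=b\}|$ and $f$ is differentially $\delta$-uniform if $\delta=\max_{a\ne0,b}\delta_f(a,b)$. For $f$ with $f(0)=0$, $f$ is strongly $r$-anti-invariant if whenever $U,W$ are subspaces of $(\mathbb F_2)^m$ with $f(U)=W$, either $\dim U=\dim W<m-r$ or $U=W=(\mathbb F_2)^m$. A permutation $\rho$ maps a partition $\mathcal A$ onto a partition $\mathcal B$ if $\{A\rho: A\in\mathcal A\}=\mathcal B$. A partition of $V$ is trivial if it is $\{\{v\}:v\in V\}$ or $\{V\}$. A transitive group $G\le\mathrm{Sym}(V)$ is primitive if it preserves no non-trivial partition of $V$. *)

From HB Require Import structures.
From mathcomp Require Import all_boot all_order all_algebra all_fingroup all_solvable.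
Set Implicit Arguments. Unset Strict Implicit. Unset Printing Implicit Defensive.
Import GRing.Theory.
Local Open Scope ring_scope.

(* The message space V = (F_2)^n, n = m*b, is modelled as the space of b x m
   matrices over F_2: row j of x : 'M['F_2]_(b,m) is the j-th brick component
   x_j in V_j = (F_2)^m. *)
Notation V b m := ('M['F_2]_(b, m)) (only parsing).

Definition parallel (b m : nat) (g : {perm 'M['F_2]_(b, m)})
    (S : 'I_b -> 'rV['F_2]_m -> 'rV['F_2]_m) :=
  forall (x : 'M['F_2]_(b, m)) (j : 'I_b), row j (g x) = S j (row j x).

Definition linear_perm (b m : nat) (l : {perm 'M['F_2]_(b, m)}) :=
  forall (a : 'F_2) (x y : 'M['F_2]_(b, m)), l (a *: x + y) = a *: l x + l y.

Definition wall (b m : nat) (I : {set 'I_b}) : {set 'M['F_2]_(b, m)} :=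
  [set x | [forall j, (j \notin I) ==> (row j x == 0)]].

Definition is_wall_index (b : nat) (I : {set 'I_b}) := (I != set0) && (I != setT).

Definition strongly_proper (b m : nat) (l : {perm 'M['F_2]_(b, m)}) :=
  forall I J : {set 'I_b}, is_wall_index I -> is_wall_index J ->
    ~ (l @: wall m I \subset wall m J).

Definition transl (b m : nat) (v : 'M['F_2]_(b, m)) : {perm 'M['F_2]_(b, m)} :=
  perm (@addIr _ v).

(* tau_k = gamma_1 lambda_1 sigma_{k_1} ... gamma_l lambda_l sigma_{k_l};
   permutations act on the right, as in MathComp ((s * t) x = t (s x)). *)
Definition encryption (b m l : nat) (g lam : 'I_l -> {perm 'M['F_2]_(b, m)})
    (kk : 'I_l -> 'M['F_2]_(b, m)) : {perm 'M['F_2]_(b, m)} :=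
  (\prod_(h < l) (g h * lam h * transl (kk h)))%g.

(* 3-round independence at round i (rounds indexed 0..l-1 here) *)
Definition three_round_indep (b m l : nat) (K : Type)
    (Phi : K -> 'I_l -> 'M['F_2]_(b, m)) (i : nat) :=
  exists kbar : 'I_l -> 'M['F_2]_(b, m),
    forall k3 : 'I_l -> 'M['F_2]_(b, m),
      exists k : K, forall h : 'I_l,
        Phi k h = (if (i.-1 <= h <= i.+1)%N then k3 h else kbar h).

Definition ddt (m : nat) (f : 'rV['F_2]_m -> 'rV['F_2]_m) (a c : 'rV['F_2]_m) : nat :=
  #|[set x : 'rV['F_2]_m | f (x + a) + f x == c]|.

Definition diff_uniform (m : nat) (f : 'rV['F_2]_m -> 'rV['F_2]_m) (d : nat) :=
  d = (\max_(p : 'rV['F_2]_m * 'rV['F_2]_m | p.1 != (0 : 'rV['F_2]_m)%R) ddt f p.1 p.2)%N.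

(* strongly r-anti-invariant; subspaces of (F_2)^m are represented by the
   row spaces of m x m matrices (mxalgebra). *)
Definition subsp (m : nat) (U : 'M['F_2]_m) : {set 'rV['F_2]_m} :=
  [set x | (x <= U)%MS].

Definition strongly_anti_invariant (m : nat) (f : 'rV['F_2]_m -> 'rV['F_2]_m) (r : nat) :=
  f 0 = 0 /\
  forall U W : 'M['F_2]_m, f @: subsp U = subsp W ->
    ((\rank U = \rank W /\ (\rank U < m - r)%N) \/ (\rank U = m /\ \rank W = m)).

Definition trivial_partition (T : finType) (P : {set {set T}}) :=
  P = [set [set x] | x : T] \/ P = [set setT].

Definition maps_partition (T : finType) (t : {perm T}) (A B : {set {set T}}) :=
  [set t @: X | X : {set T} in A] = B.

From HB Require Import structures.
From mathcomp Require Import all_boot all_order all_algebra all_fingroup all_solvable.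
From mathcomp Require Import mxabelem zify.
Set Implicit Arguments. Unset Strict Implicit. Unset Printing Implicit Defensive.
Import GRing.Theory.
Local Open Scope ring_scope.

(* Since the round keys k_(i-1), k_i, k_(i+1) vary freely, the partitions
   met between those rounds are invariant under every translation, so each
   is the coset partition of its block of 0, a subspace.  A round map
   gamma * lambda carrying one such partition to another sends block to
   block, and sends the derivatives x |-> gamma (x + u) + gamma x (u in the
   block) into the image block.  Read brick by brick, differential
   2^r-uniformity and strong (r-1)-anti-invariance of the S-boxes leave only
   the trivial subspaces of (F_2)^m, so the block is a wall.  Applied to
   rounds i and i+1, this makes lambda_i map a proper wall onto a proper
   wall, against strong properness.  Primitivity follows, the key of round
   i+1 making the group transitive. *)

Section PermPartition.
Variable T : finType.
Implicit Types (s t : {perm T}) (X : {set T}) (P Q : {set {set T}}).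

Definition pimage t P := [set t @: X | X : {set T} in P].

Lemma imset_permM s t X : (s * t)%g @: X = t @: (s @: X).
Proof. by rewrite -imset_comp; apply: eq_imset => x; rewrite permM. Qed.

Lemma imset_perm1 X : (1%g : {perm T}) @: X = X.
Proof. by rewrite (eq_imset _ (@perm1 T)) imset_id. Qed.

Lemma imset_permT t : t @: [set: T] = setT.
Proof. by apply/eqP; rewrite eqEcard subsetT /= card_imset //; apply: perm_inj. Qed.

Lemma pimageM s t P : pimage (s * t)%g P = pimage t (pimage s P).
Proof. by rewrite /pimage -imset_comp; apply: eq_imset => X /=; rewrite imset_permM. Qed.

Lemma pimage1 P : pimage 1%g P = P.
Proof. by rewrite /pimage (eq_imset _ imset_perm1) imset_id. Qed.

Lemma pimageK t : cancel (pimage t) (pimage t^-1%g).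
Proof. by move=> P; rewrite -pimageM mulgV pimage1. Qed.

Lemma pimage_inj t : injective (pimage t).
Proof. exact: can_inj (pimageK t). Qed.

Lemma partition_pimage t P : partition P setT -> partition (pimage t P) setT.
Proof.
case/and3P => /eqP coverP trivP nP; apply/and3P; split.
- by rewrite /pimage cover_imset -imset_cover coverP imset_permT.
- by rewrite /pimage imset_trivIset //; apply: perm_inj.
- apply/imsetP => -[X XP] /esym/eqP; rewrite imset_eq0 => /eqP X0.
  by move: nP; rewrite -X0 XP.
Qed.

Lemma trivial_partition_pimage t P :
  trivial_partition P -> trivial_partition (pimage t P).
Proof.
rewrite /pimage; case=> ->; [left | right]; last first.
  by rewrite imset_set1 imset_permT.
rewrite -imset_comp; apply/setP => Y; apply/imsetP/imsetP => -[x _ ->].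
  by exists (t x); rewrite //= imset_set1.
by exists (t^-1%g x); rewrite //= imset_set1 permKV.
Qed.

Lemma pblock_pimage t P : partition P setT ->
  forall x, t @: pblock P x = pblock (pimage t P) (t x).
Proof.
move=> partP x; have /and3P [/eqP coverP _ _] := partP.
have /and3P [_ trivP' _] := partition_pimage t partP.
apply/esym/def_pblock => //.
  by apply: imset_f; apply: pblock_mem; rewrite coverP.
by apply: imset_f; rewrite mem_pblock coverP.
Qed.

Lemma primitive_of_no_invariant_partition (A : {set {perm T}}) :
    [transitive <<A>>, on setT | 'P] ->
    (forall Q, partition Q setT -> ~ trivial_partition Q ->
       ~ {in A, forall t, pimage t Q = Q}) ->
  [primitive <<A>>, on setT | 'P].
Proof.
move=> transA noQ; apply/andP; split=> //.
apply/existsP => -[Q /and3P [partQ actQ /andP [Q_gt1 Q_ltT]]].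
apply: (noQ Q partQ).
  case=> defQ; last by rewrite defQ cards1 in Q_gt1.
  by move: Q_ltT; rewrite defQ card_imset ?cardsT ?ltnn //; apply: set1_inj.
move=> t At; apply/eqP; rewrite eqEcard card_imset; last first.
  by apply: imset_inj; apply: perm_inj.
rewrite leqnn andbT; apply/subsetP => _ /imsetP [X XQ ->].
have -> : t @: X = ('P^*)%act X t by [].
by rewrite (actsP actQ) // mem_gen.
Qed.

End PermPartition.

Lemma rowD (R : zmodType) p q (i : 'I_p) (x y : 'M[R]_(p, q)) :
  row i (x + y) = row i x + row i y.
Proof. by apply/rowP => j; rewrite !mxE. Qed.

Section F2Matrices.
Variables b m : nat.
Implicit Types (x y : 'M['F_2]_(b, m)) (v w : 'rV['F_2]_m).

Lemma addrr_F2 x : x + x = 0.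
Proof.
apply/matrixP => i j; rewrite !mxE.
by apply: addrr_pchar2; apply: pchar_Fp.
Qed.

Lemma oppr_F2 x : - x = x.
Proof. by rewrite -[LHS]add0r -(addrr_F2 x) addrK. Qed.

Lemma addr_eq0_F2 x y : (x + y == 0) = (x == y).
Proof. by rewrite addr_eq0 oppr_F2. Qed.

Definition brick (j : 'I_b) v : 'M['F_2]_(b, m) := \matrix_k (if k == j then v else 0).

Lemma row_brick j k v : row k (brick j v) = if k == j then v else 0.
Proof. exact: rowK. Qed.

Lemma brick0 j : brick j 0 = 0.
Proof. by apply/row_matrixP => k; rewrite row_brick row0; case: ifP. Qed.

Lemma brickD j v w : brick j (v + w) = brick j v + brick j w.
Proof.
by apply/row_matrixP => k; rewrite rowD !row_brick; case: ifP; rewrite ?addr0.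
Qed.

Lemma brick_inj j : injective (brick j).
Proof. by move=> v w /(congr1 (row j)); rewrite !row_brick eqxx. Qed.

Lemma sum_brick x : x = \sum_j brick j (row j x).
Proof.
apply/row_matrixP => k; rewrite raddf_sum (bigD1 k) //=.
rewrite row_brick eqxx big1 ?addr0 // => j /negbTE kj.
by rewrite row_brick eq_sym kj.
Qed.

Lemma addr_closed_brick (L : {set 'M['F_2]_(b, m)}) j :
  addr_closed L -> addr_closed [set v | brick j v \in L].
Proof.
case=> L0 LD; split=> [|v w]; rewrite !inE ?brick0 // brickD.
exact: LD.
Qed.

Lemma wall0 : wall m (set0 : {set 'I_b}) = [set 0].
Proof.
apply/setP => x; rewrite !inE; apply/forallP/eqP => [x0 | ->].
  by apply/row_matrixP => k; rewrite row0; apply/eqP; have := x0 k; rewrite inE.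
by move=> k; rewrite row0 eqxx implybT.
Qed.

Lemma wallT : wall m (setT : {set 'I_b}) = setT.
Proof. by apply/setP => x; rewrite !inE; apply/forallP => k; rewrite inE. Qed.

End F2Matrices.

Section ParallelMap.
Variables (b m : nat) (g : {perm 'M['F_2]_(b, m)}) (S : 'I_b -> 'rV['F_2]_m -> 'rV['F_2]_m).
Hypotheses (gS : parallel g S) (g0 : g 0 = 0).

Lemma sbox0 j : S j 0 = 0.
Proof. by have := gS 0 j; rewrite g0 !row0. Qed.

Lemma parallel_brick j v : g (brick j v) = brick j (S j v).
Proof.
apply/row_matrixP => k; rewrite gS !row_brick; case: eqP => [-> // | _].
exact: sbox0.
Qed.

Lemma sbox_inj j : injective (S j).
Proof.
move=> v w eqS; apply: (@brick_inj _ _ j); apply: (@perm_inj _ g).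
by rewrite !parallel_brick eqS.
Qed.

Lemma row_parallel_diff x u k :
  row k (g (x + u) + g x) = S k (row k x + row k u) + S k (row k x).
Proof. by rewrite rowD !gS rowD. Qed.

Lemma parallel_wall J : g @: wall m J = wall m J.
Proof.
apply/eqP; rewrite eqEcard card_imset; last exact: perm_inj.
rewrite leqnn andbT; apply/subsetP => y /imsetP [x]; rewrite !inE => /forallP xJ ->.
apply/forallP => k; apply/implyP => kJ; rewrite gS.
by have := xJ k; rewrite kJ => /eqP ->; rewrite sbox0.
Qed.

End ParallelMap.

Lemma card_le_fibres (T R : finType) (h : T -> R) (Y : {set R}) d :
    (forall y, #|[set x | h x == y]| <= d)%N -> (forall x, h x \in Y) ->
  (#|T| <= #|Y| * d)%N.
Proof.
move=> fibre_le hY; rewrite -[X in (X <= _)%N]sum1_card.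
rewrite (partition_big h (mem Y)) //= -sum_nat_const; apply: leq_sum => y _.
apply: leq_trans (fibre_le y); rewrite -sum1_card.
by apply/eq_leq/eq_bigl => x; rewrite inE.
Qed.

Lemma diff_uniform_le m (f : 'rV['F_2]_m -> 'rV['F_2]_m) d :
  diff_uniform f d -> forall a c, a != 0 -> (ddt f a c <= d)%N.
Proof. by move=> -> a c a0; apply: (leq_bigmax_cond (a, c)). Qed.

Lemma card_rV_F2 m : #|{: 'rV['F_2]_m}| = (2 ^ m)%N.
Proof. by rewrite card_mx card_Fp // mul1n. Qed.

Lemma card_subsp m (W : 'M['F_2]_m) : #|subsp W| = (2 ^ \rank W)%N.
Proof. by have := card_rowg W; rewrite card_Fp. Qed.

Lemma subsp_rowg_mx m (L : {set 'rV['F_2]_m}) : addr_closed L -> subsp (rowg_mx L) = L.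
Proof.
case=> L0 LD; have gL : group_set L by apply/group_setP; split=> // u v; apply: LD.
exact: rowg_mxK (Group gL).
Qed.

Section SboxSubspace.
Variables (m r : nat) (f : 'rV['F_2]_m -> 'rV['F_2]_m).
Hypotheses (r_lt_m : (r < m)%N) (f_du : forall a c, a != 0 -> (ddt f a c <= 2 ^ r)%N).

Lemma sbox_diff_nonconst a : a != 0 -> exists x, f (x + a) + f x != f a + f 0.
Proof.
move=> a0; apply/existsP; apply: contraT; rewrite negb_exists => /forallP const.
have := f_du (f a + f 0) a0.
have -> : ddt f a (f a + f 0) = (2 ^ m)%N.
  rewrite /ddt -card_rV_F2; apply: eq_card => x.
  by rewrite inE; apply/negbNE.
by rewrite leq_exp2l // leqNgt r_lt_m.
Qed.

Hypotheses (f_inj : injective f) (f_sai : strongly_anti_invariant f (r - 1)).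

Lemma sbox_subspace_trivial (U X : {set 'rV['F_2]_m}) :
    addr_closed U -> addr_closed X -> f @: U = X ->
    (forall x a, a \in U -> f (x + a) + f x \in X) ->
  U = [set 0] \/ U = setT.
Proof.
move=> U_cl X_cl fU f_diff; have [U0 _] := U_cl; have [X0 _] := X_cl.
have := f_sai.2 (rowg_mx U) (rowg_mx X).
rewrite !subsp_rowg_mx // => /(_ fU) [[eq_rank rank_lt] | [rankU _]]; last first.
  right; apply/eqP; rewrite eqEcard subsetT /= cardsT card_rV_F2.
  by rewrite -(subsp_rowg_mx U_cl) card_subsp rankU.
left; apply/eqP; rewrite eqEsubset sub1set U0 andbT; apply/subsetP => a aU.
rewrite inE; apply: contraT => a0.
have diff_nz x : f (x + a) + f x \in X :\ 0.
  rewrite !inE f_diff // andbT addr_eq0_F2.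
  by apply: contra a0 => /eqP /f_inj /eqP; rewrite -subr_eq0 addrC addKr.
(* The derivative in direction a avoids 0 and takes each value at most 2^r
   times, whence 2^m <= (2^k - 1) 2^r < 2^(k + r) <= 2^m. *)
have := card_le_fibres (fun c => f_du c a0) diff_nz.
have -> : #|X :\ 0| = (2 ^ \rank (rowg_mx X) - 1)%N.
  by rewrite -card_subsp subsp_rowg_mx // (cardsD1 0 X) X0 add1n subn1.
rewrite card_rV_F2 -eq_rank; move: rank_lt; set k := \rank _ => rank_lt.
have : (2 ^ k * 2 ^ r <= 2 ^ m)%N by rewrite -expnD leq_exp2l //; lia.
have : (0 < 2 ^ r)%N by rewrite expn_gt0.
rewrite mulnBl mul1n; lia.
Qed.

End SboxSubspace.

Section ParallelSubspace.
Variables (b m r : nat) (g : {perm 'M['F_2]_(b, m)}).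
Variable S : 'I_b -> 'rV['F_2]_m -> 'rV['F_2]_m.
Hypotheses (gS : parallel g S) (g0 : g 0 = 0) (r_lt_m : (r < m)%N).
Hypothesis S_du : forall j a c, a != 0 -> (ddt (S j) a c <= 2 ^ r)%N.
Hypothesis S_sai : forall j, strongly_anti_invariant (S j) (r - 1).
Variables U X : {set 'M['F_2]_(b, m)}.
Hypotheses (U_cl : addr_closed U) (X_cl : addr_closed X) (gU : g @: U = X).
Hypothesis g_diff : forall x u, u \in U -> g (x + u) + g x \in X.

Let Uj j := [set v | brick j v \in U].
Let Xj j := [set v | brick j v \in X].

Lemma sbox_image j : S j @: Uj j = Xj j.
Proof.
apply/setP => w; apply/imsetP/idP => [[v] | ].
  by rewrite !inE => vU ->; rewrite -(parallel_brick gS g0) -gU imset_f.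
rewrite inE -gU => /imsetP [z zU gz].
pose v := invF (sbox_inj gS g0 (j := j)) w.
have Sv : S j v = w by apply: f_invF.
have zv : z = brick j v.
  by apply: (@perm_inj _ g); rewrite -gz (parallel_brick gS g0) Sv.
by exists v; rewrite ?inE -?zv.
Qed.

Lemma brick_subspace_trivial j : Uj j = [set 0] \/ Uj j = setT.
Proof.
apply: (sbox_subspace_trivial r_lt_m (S_du j) (sbox_inj gS g0 (j := j)) (S_sai j)).
- exact: addr_closed_brick U_cl.
- exact: addr_closed_brick X_cl.
- exact: sbox_image.
move=> x a; rewrite !inE => aU.
by have := g_diff (brick j x) aU; rewrite -brickD !(parallel_brick gS g0) -brickD.
Qed.

Lemma brick_subspace_full u j : u \in U -> row j u != 0 -> Uj j = setT.
Proof.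
move=> uU a0; case: (brick_subspace_trivial j) => // Uj0.
have Xj0 : Xj j = [set 0] by rewrite -sbox_image Uj0 imset_set1 (sbox0 gS g0).
set a := row j u in a0.
pose D x := S j (x + a) + S j x.
have [x1 Dx1] := sbox_diff_nonconst r_lt_m (S_du j) a0.
(* Off row j the derivatives along u at brick j x1 and at 0 agree, so their
   sum lies in the j-th brick. *)
have : D x1 + D 0 \in Xj j.
  rewrite inE; have [_ XD] := X_cl; have -> : brick j (D x1 + D 0) =
      (g (brick j x1 + u) + g (brick j x1)) + (g (brick j 0 + u) + g (brick j 0)).
    apply/row_matrixP => k; rewrite rowD !(row_parallel_diff gS) !row_brick.
    by case: eqP => [-> // | _]; rewrite addrr_F2.
  by apply: XD; apply: g_diff.
by rewrite Xj0 inE addr_eq0_F2 /D add0r (negbTE Dx1).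
Qed.

Lemma parallel_subspace_wall : exists J, U = wall m J /\ X = wall m J.
Proof.
pose J := [set j | Uj j == setT].
suff UJ : U = wall m J by exists J; rewrite -gU UJ (parallel_wall gS g0).
have [U0 UD] := U_cl.
apply/setP => x; rewrite inE; apply/idP/forallP => [xU k | xJ].
  apply/implyP; apply: contraR; rewrite inE => xk.
  by rewrite (brick_subspace_full xU xk).
rewrite (sum_brick x); apply: (big_ind (fun y => y \in U)) => // k _.
have := xJ k; case: (boolP (k \in J)) => [|_ /eqP ->]; last by rewrite brick0.
rewrite inE => /eqP UkT _; suff : row k x \in Uj k by rewrite inE.
by rewrite UkT inE.
Qed.

End ParallelSubspace.

Section TranslationInvariance.
Variables b m : nat.
Local Notation V := 'M['F_2]_(b, m).
Implicit Types (x y : V) (P : {set {set V}}).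

Lemma translE v x : transl v x = x + v.
Proof. by rewrite permE. Qed.

Lemma transl0 : transl (0 : V) = 1%g.
Proof. by apply/permP => x; rewrite translE perm1 addr0. Qed.

Definition transl_invariant P := forall d, pimage (transl d) P = P.

Lemma transl_invariant_of_free_key (s t : {perm V}) P B :
  (forall a, pimage (s * transl a * t)%g P = B) -> transl_invariant (pimage s P).
Proof.
move=> sat_B a; apply: (@pimage_inj _ t).
by rewrite -!pimageM !mulgA sat_B -(sat_B 0) transl0 mulg1.
Qed.

Section InvariantPartition.
Variable P : {set {set V}}.
Hypotheses (partP : partition P setT) (invP : transl_invariant P).

Lemma mem_pblock_transl x y : (y \in pblock P x) = (y + x \in pblock P 0).
Proof.
have := pblock_pimage (transl x) partP 0; rewrite invP translE add0r => <-.
apply/imsetP/idP => [[z z0 ->] | yx]; first by rewrite translE -addrA addrr_F2 addr0.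
by exists (y + x); rewrite // translE -addrA addrr_F2 addr0.
Qed.

Lemma pblock0_addr_closed : addr_closed (pblock P 0).
Proof.
have /and3P [/eqP coverP trivP _] := partP.
split=> [|u v u0 v0]; first by rewrite mem_pblock coverP.
by rewrite -mem_pblock_transl (same_pblock trivP v0).
Qed.

Lemma pblock0_nontrivial :
  ~ trivial_partition P -> pblock P 0 != [set 0] /\ pblock P 0 != setT.
Proof.
have /and3P [/eqP coverP trivP nP] := partP.
have blockP Y : Y \in P -> exists x, Y = pblock P x.
  move=> YP; have /set0Pn [x xY] : Y != set0 by apply: contraNneq nP => <-.
  by exists x; rewrite (def_pblock trivP YP xY).
move=> ntP; split; apply/negP => /eqP P0; apply: ntP; [left | right].
  have pblock1 x : pblock P x = [set x].
    by apply/setP => y; rewrite mem_pblock_transl P0 !inE addr_eq0_F2.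
  apply/setP => Y; apply/idP/imsetP => [/blockP [x ->] | [x _ ->]].
    by exists x; rewrite ?pblock1.
  by rewrite -pblock1 pblock_mem ?coverP.
apply/setP => Y; rewrite inE; apply/idP/eqP => [/blockP [x ->] | ->].
  by apply/setP => y; rewrite mem_pblock_transl P0 !inE.
by rewrite -P0 pblock_mem ?coverP.
Qed.

Lemma pimage_pblock0 (t : {perm V}) : t 0 = 0 ->
  t @: pblock P 0 = pblock (pimage t P) 0.
Proof. by move=> t0; rewrite (pblock_pimage t partP) t0. Qed.

End InvariantPartition.

Lemma pimage_pblock0_diff P (t : {perm V}) x u :
    partition P setT -> transl_invariant P -> transl_invariant (pimage t P) ->
    u \in pblock P 0 ->
  t (x + u) + t x \in pblock (pimage t P) 0.
Proof.
move=> partP invP invP' u0; have partP' := partition_pimage t partP.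
rewrite -(mem_pblock_transl partP' invP') -(pblock_pimage t partP) imset_f //.
by rewrite (mem_pblock_transl partP invP) addrAC addrr_F2 add0r.
Qed.

Lemma linear_permD (lam : {perm V}) : linear_perm lam ->
  forall x y, lam (x + y) = lam x + lam y.
Proof. by move=> lam_lin x y; have := lam_lin 1 x y; rewrite !scale1r. Qed.

Lemma linear_perm0 (lam : {perm V}) : linear_perm lam -> lam 0 = 0.
Proof. by move=> lam_lin; rewrite -[0 in LHS](addrr_F2 0) linear_permD // addrr_F2. Qed.

End TranslationInvariance.

Lemma is_wall_index_of_proper b m (J : {set 'I_b}) :
  wall m J != [set 0] -> wall m J != setT -> is_wall_index J.
Proof.
move=> ne0 neT; apply/andP; split.
  by apply: contraNneq ne0 => ->; rewrite wall0.
by apply: contraNneq neT => ->; rewrite wallT.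
Qed.

Section Round.
Variables (b m r : nat) (g lam : {perm 'M['F_2]_(b, m)}).
Variable S : 'I_b -> 'rV['F_2]_m -> 'rV['F_2]_m.
Hypotheses (gS : parallel g S) (g0 : g 0 = 0) (lam_lin : linear_perm lam).
Hypotheses (r_lt_m : (r < m)%N) (S_du : forall j a c, a != 0 -> (ddt (S j) a c <= 2 ^ r)%N).
Hypothesis S_sai : forall j, strongly_anti_invariant (S j) (r - 1).

Lemma round_pblock0_wall P :
    partition P setT -> transl_invariant P -> transl_invariant (pimage (g * lam) P) ->
  exists J, pblock P 0 = wall m J /\ lam @: wall m J = pblock (pimage (g * lam) P) 0.
Proof.
move=> partP invP invP'; set P' := pimage _ P.
have partP' : partition P' setT by apply: partition_pimage.
have [B'0 B'D] := pblock0_addr_closed partP' invP'.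
have glam0 : (g * lam)%g 0 = 0 by rewrite permM g0 linear_perm0.
pose X := [set y | lam y \in pblock P' 0].
have gU : g @: pblock P 0 = X.
  apply/setP => y; rewrite inE -(pimage_pblock0 partP glam0) imset_permM.
  by rewrite mem_imset //; apply: perm_inj.
have X_cl : addr_closed X.
  split=> [|u v]; rewrite !inE ?linear_perm0 // linear_permD //; exact: B'D.
have g_diff x u : u \in pblock P 0 -> g (x + u) + g x \in X.
  by move=> u0; rewrite inE linear_permD // -!permM pimage_pblock0_diff.
have [J [PJ XJ]] := parallel_subspace_wall gS g0 r_lt_m S_du S_sai
  (pblock0_addr_closed partP invP) X_cl gU g_diff.
by exists J; split=> //; rewrite -XJ -gU -imset_permM (pimage_pblock0 partP glam0).
Qed.

End Round.

Section ThreeRounds.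
Variables (b m r : nat) (g2 lam2 g3 lam3 : {perm 'M['F_2]_(b, m)}).
Variables S2 S3 : 'I_b -> 'rV['F_2]_m -> 'rV['F_2]_m.
Hypotheses (g2S : parallel g2 S2) (g20 : g2 0 = 0) (lam2_lin : linear_perm lam2).
Hypotheses (g3S : parallel g3 S3) (g30 : g3 0 = 0) (lam3_lin : linear_perm lam3).
Hypotheses (r_lt_m : (r < m)%N) (lam2_proper : strongly_proper lam2).
Hypothesis S2_du : forall j a c, a != 0 -> (ddt (S2 j) a c <= 2 ^ r)%N.
Hypothesis S2_sai : forall j, strongly_anti_invariant (S2 j) (r - 1).
Hypothesis S3_du : forall j a c, a != 0 -> (ddt (S3 j) a c <= 2 ^ r)%N.
Hypothesis S3_sai : forall j, strongly_anti_invariant (S3 j) (r - 1).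

Lemma three_rounds_no_partition (T1 Q : {perm 'M['F_2]_(b, m)}) A B :
    partition A setT -> ~ trivial_partition B ->
    (forall a c d, pimage (T1 * transl a * (g2 * lam2) * transl c
                            * (g3 * lam3) * transl d * Q)%g A = B) ->
  False.
Proof.
move=> partA ntB AB.
pose A1 := pimage T1 A; pose C := pimage (g2 * lam2) A1; pose B1 := pimage (g3 * lam3) C.
have partA1 : partition A1 setT by apply: partition_pimage.
have partC : partition C setT by apply: partition_pimage.
have invA1 : transl_invariant A1.
  apply: (transl_invariant_of_free_key (t := g2 * lam2 * (g3 * lam3) * Q) (B := B)) => a.
  by rewrite -(AB a 0 0) !transl0 !mulg1 !mulgA.
have invC : transl_invariant C.
  rewrite /C /A1 -pimageM; apply: (transl_invariant_of_free_key (t := g3 * lam3 * Q) (B := B)) => c.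
  by rewrite -(AB 0 c 0) !transl0 !mulg1 !mulgA.
have invB1 : transl_invariant B1.
  rewrite /B1 /C /A1 -!pimageM; apply: (transl_invariant_of_free_key (t := Q) (B := B)) => d.
  by rewrite -(AB 0 0 d) !transl0 !mulg1 !mulgA.
have ntC : ~ trivial_partition C.
  have CB : pimage (g3 * lam3 * Q) C = B.
    by rewrite /C /A1 -!pimageM -(AB 0 0 0) !transl0 !mulg1 !mulgA.
  by move=> /(trivial_partition_pimage (g3 * lam3 * Q)); rewrite CB.
have [J1 [_ lamJ1]] := round_pblock0_wall g2S g20 lam2_lin r_lt_m S2_du S2_sai
  partA1 invA1 invC.
have [J2 [CJ2 _]] := round_pblock0_wall g3S g30 lam3_lin r_lt_m S3_du S3_sai
  partC invC invB1.
have [C0 CT] := pblock0_nontrivial partC invC ntC.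
apply: (lam2_proper (I := J1) (J := J2)); last by rewrite lamJ1 CJ2.
- apply: (is_wall_index_of_proper (m := m)).
    by apply: contraNneq C0 => J10; rewrite -lamJ1 J10 imset_set1 linear_perm0.
  by apply: contraNneq CT => J1T; rewrite -lamJ1 J1T imset_permT.
- by apply: (is_wall_index_of_proper (m := m)); rewrite -CJ2.
Qed.

End ThreeRounds.

Section OrdinalProducts.
Variables (G : finGroupType) (l : nat).
Implicit Type F : 'I_l -> G.

Definition ord_ext F (n : nat) : G := oapp F 1%g (insub n).

Lemma ord_ext_val F (h : 'I_l) : ord_ext F h = F h.
Proof. by rewrite /ord_ext valK. Qed.

Lemma eq_prod_ord_ext F F' p q : (forall h : 'I_l, (p <= h < q)%N -> F h = F' h) ->
  (\prod_(p <= n < q) ord_ext F n = \prod_(p <= n < q) ord_ext F' n)%g.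
Proof.
move=> eqF; apply: eq_big_nat => n npq; rewrite /ord_ext.
by case: insubP => //= h _ hn; apply: eqF; rewrite hn.
Qed.

Lemma prod_ord_window F (i0 i1 i2 : 'I_l) : i1 = i0.+1 :> nat -> i2 = i1.+1 :> nat ->
  (\prod_(h < l) F h = \prod_(0 <= n < i0) ord_ext F n * F i0 * F i1 * F i2
                       * \prod_(i2.+1 <= n < l) ord_ext F n)%g.
Proof.
move=> e01 e12; have := ltn_ord i2.
rewrite -(eq_bigr _ (fun h _ => ord_ext_val F h)) -(big_mkord xpredT) => i2_lt_l.
have [i0_le_l i0_le_i2 i2_le_l] : [/\ i0 <= l, i0 <= i2.+1 & i2.+1 <= l]%N by split; lia.
rewrite (big_cat_nat (leq0n i0) i0_le_l) (big_cat_nat i0_le_i2 i2_le_l).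
suff -> : (\prod_(i0 <= n < i2.+1) ord_ext F n = F i0 * F i1 * F i2)%g by rewrite /= !mulgA.
rewrite big_ltn; last lia.
rewrite -e01 big_ltn; last lia.
rewrite -e12 big_ltn // big_geq //.
by rewrite !ord_ext_val mulg1 !mulgA.
Qed.

End OrdinalProducts.

Definition round_perm b m l (g lam : 'I_l -> {perm 'M['F_2]_(b, m)}) (h : 'I_l)
    (k : 'M['F_2]_(b, m)) : {perm 'M['F_2]_(b, m)} :=
  (g h * lam h * transl k)%g.

Lemma encryption_window b m l (K : Type) (g lam : 'I_l -> {perm 'M['F_2]_(b, m)})
    (Phi : K -> 'I_l -> 'M['F_2]_(b, m)) (i0 i1 i2 : 'I_l) :
    i1 = i0.+1 :> nat -> i2 = i1.+1 :> nat -> three_round_indep Phi i1 ->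
  exists Pre Post : {perm 'M['F_2]_(b, m)}, forall a c d, exists k,
    encryption g lam (Phi k) = (Pre * round_perm g lam i0 a * round_perm g lam i1 c
                                * round_perm g lam i2 d * Post)%g.
Proof.
move=> e01 e12 [kbar Phi_kbar]; pose Fbar h := round_perm g lam h (kbar h).
exists (\prod_(0 <= n < i0) ord_ext Fbar n)%g, (\prod_(i2.+1 <= n < l) ord_ext Fbar n)%g.
move=> a c d; pose k3 (h : 'I_l) := if h == i0 then a else if h == i1 then c else d.
have [k Phi_k] := Phi_kbar k3; exists k.
have Phi_out (h : 'I_l) : ~~ (i1.-1 <= h <= i1.+1)%N -> Phi k h = kbar h.
  by move=> /negbTE out; rewrite Phi_k out.
have Phi_in (h : 'I_l) : (i1.-1 <= h <= i1.+1)%N -> Phi k h = k3 h.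
  by move=> win; rewrite Phi_k win.
have i10 : (i1 == i0) = false by apply/negbTE/eqP => /(congr1 val) /=; lia.
have i20 : (i2 == i0) = false by apply/negbTE/eqP => /(congr1 val) /=; lia.
have i21 : (i2 == i1) = false by apply/negbTE/eqP => /(congr1 val) /=; lia.
rewrite /encryption (prod_ord_window (fun h => round_perm g lam h (Phi k h)) e01 e12).
rewrite !Phi_in ?/k3 ?eqxx ?i10 ?i20 ?i21; try (apply/andP; split; lia).
congr (_ * _ * _ * _ * _)%g; apply: eq_prod_ord_ext => h /andP [h_lo h_hi];
  by rewrite /= Phi_out //; apply/negP => /andP [? ?]; lia.
Qed.

Lemma transitive_gen_transl b m (A : {set {perm 'M['F_2]_(b, m)}})
    (s t : {perm 'M['F_2]_(b, m)}) :
  (forall d, (s * transl d * t)%g \in A) -> [transitive <<A>>, on setT | 'P].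
Proof.
move=> stA; pose t_ d := (s * transl d * t)%g.
have tA d : t_ d \in <<A>>%g by apply: mem_gen; apply: stA.
apply/imsetP; exists (t 0) => //; apply/setP => w; rewrite inE; apply/esym/orbitP.
exists ((t_ 0)^-1 * t_ (t^-1 w))%g; first by rewrite groupM ?groupV ?tA.
have s0 : s ((t_ 0)^-1%g (t 0)) = 0.
  apply: (@perm_inj _ t); have := permKV (t_ 0) (t 0).
  by rewrite {1}/t_ !permM translE addr0.
by rewrite /= apermE permM {1}/t_ !permM s0 translE add0r permKV.
Qed.

Unset Implicit Arguments. Set Strict Implicit.

Theorem theorem3p3
  (m b l : nat) (hm : (1 < m)%N) (hb : (1 < b)%N)
  (K : finType)
  (g lam : 'I_l -> {perm 'M['F_2]_(b, m)})
  (S : 'I_l -> 'I_b -> 'rV['F_2]_m -> 'rV['F_2]_m)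
  (Phi : K -> 'I_l -> 'M['F_2]_(b, m))
  (hpar : forall h, parallel (g h) (S h))
  (hg0 : forall h, g h 0 = 0)
  (hlin : forall h, linear_perm (lam h))
  (i : 'I_l) (hi1 : (1 <= i)%N) (hi2 : (i.+2 <= l)%N)
  (hPhi : three_round_indep Phi i)
  (r : nat) (hr : (r < m)%N)
  (hS : forall (h : 'I_l) (j : 'I_b), (h == i :> nat) || (h == i.+1 :> nat) ->
          diff_uniform (S h j) (2 ^ r)%N /\ strongly_anti_invariant (S h j) (r - 1)%N)
  (hprop : strongly_proper (lam i)) :
  (~ exists A B : {set {set 'M['F_2]_(b, m)}},
      [/\ partition A setT, partition B setT,
          ~ trivial_partition A, ~ trivial_partition B &
          forall k : K, maps_partition (encryption g lam (Phi k)) A B])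
  /\ [primitive <<[set encryption g lam (Phi k) | k : K]>>, on setT | 'P].
Proof.
have lt_i0 : (i.-1 < l)%N by lia.
have lt_i2 : (i.+1 < l)%N by lia.
pose i0 : 'I_l := Ordinal lt_i0; pose i2 : 'I_l := Ordinal lt_i2.
have e0 : i = i0.+1 :> nat by rewrite /= prednK.
have [Pre [Post encE]] := encryption_window g lam e0 (erefl : i2 = i.+1 :> nat) hPhi.
have [Si Si2] : ((i == i :> nat) || (i == i.+1 :> nat))
                /\ ((i2 == i :> nat) || (i2 == i.+1 :> nat)) by rewrite !eqxx orbT.
have no_partition A B : partition A setT -> ~ trivial_partition B ->
    (forall k, maps_partition (encryption g lam (Phi k)) A B) -> False.
  move=> partA ntB AB.
  apply: (three_rounds_no_partition (hpar i) (hg0 i) (hlin i) (hpar i2) (hg0 i2)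
    (hlin i2) hr hprop _ _ _ _ (T1 := (Pre * g i0 * lam i0)%g) (Q := Post) partA ntB).
  - by move=> j; apply: diff_uniform_le; case: (hS i j Si).
  - by move=> j; case: (hS i j Si).
  - by move=> j; apply: diff_uniform_le; case: (hS i2 j Si2).
  - by move=> j; case: (hS i2 j Si2).
  move=> a c d; have [k encEk] := encE a c d.
  by rewrite -(AB k) /maps_partition encEk /round_perm !mulgA.
split; first by case=> A [B [partA _ _ ntB AB]]; apply: no_partition partA ntB AB.
apply: primitive_of_no_invariant_partition.
  apply: (transitive_gen_transl (s := (Pre * round_perm g lam i0 0
    * round_perm g lam i 0 * g i2 * lam i2)%g) (t := Post)) => d.
  have [k encEk] := encE 0 0 d.
  by apply/imsetP; exists k; rewrite // encEk /round_perm !mulgA.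
move=> Q partQ ntQ invQ; apply: (no_partition Q Q partQ ntQ) => k.
by apply: invQ; apply: imset_f.
Qed.
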